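(* Let $F=\{T_1,\dots,T_n\}$ be a finite family of reduction operators relative to a well-ordered set $(G,<)$ and let $2\le i\le n$. Identifying $\mathrm{syz}(T_1,\dots,T_{i-1})$ with its image under $\iota_i:(v_1,\dots,v_{i-1})\mapsto(v_1,\dots,v_{i-1},0)$, we have the direct sum decomposition \[\mathrm{syz}(T_1,\dots,T_i)=\mathrm{im}(\iota_i)\oplus\mathbb{K}\{s_{i,g_0}\mid g_0\in\mathrm{red}(U_{i-1}\vee T_i)\},\] where $s_{i,g_0}$ is viewed in $\ker T_1\times\dots\times\ker T_i$.
   Context: Let $\mathbb{K}$ be a field, $(G,<)$ a well-ordered set and $\mathbb{K}G$ the vector space with basis $G$. For $v\neq 0$, $\mathrm{lt}(v)$ is the greatest element of $G$ appearing with nonzero coefficient in $v$. Extend $<$ to $\mathbb{K}G$: $u<v$ if $u=0$ and $v\neq0$, or if $\mathrm{lt}(u)<\mathrm{lt}(v)$; $u\le v$ means $u<v$ or $u=v$. A reduction operator is an idempotent linear endomorphism $T$ of $\mathbb{K}G$ with $T(g)\le g$ for all $g\in G$; $\mathrm{red}(T)=\{g\in G\mid T(g)\neq g\}$. The elements $g-T(g)$, $g\in\mathrm{red}(T)$, form a basis of $\ker T$; the expression of $v\in\ker T$ in this basis is its $T$-decomposition. For every subspace $V$ there is a unique reduction operator $\ker^{-1}(V)$ with kernel $V$; $T\wedge T'=\ker^{-1}(\ker T+\ker T')$, $T\vee T'=\ker^{-1}(\ker T\cap\ker T')$, and $T_1\wedge\dots\wedge T_k=\ker^{-1}(\sum\ker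 T_j)$. For a finite family $F'=\{T_1,\dots,T_k\}$: $\mathbf{ker}(F')=\ker T_1\times\dots\times\ker T_k$; $\pi_{F'}(v_1,\dots,v_k)=v_1+\dots+v_k$; $\mathrm{syz}(F')=\mathrm{syz}(T_1,\dots,T_k)=\ker\pi_{F'}$. For $g\in\mathrm{red}(T_j)$, $e_{j,g}$ is the tuple with $g-T_j(g)$ at position $j$ and $0$ elsewhere; these form a basis of $\mathbf{ker}(F')$, well-ordered by $e_{j,g}\sqsubset e_{j',g'}$ iff $j<j'$, or $j=j'$ and $g<g'$. The leading term of a nonzero element is the $\sqsubset$-greatest $e_{j,g}$ in its expansion; $\mathrm{lt}(\mathrm{syz}(F'))$ is the set of leading terms of nonzero syzygies. Every $v\in\ker(T_1\wedge\dots\wedge T_k)$ has a unique expression $v=\sum\lambda_{j,g}(g-T_j(g))$ over pairs with $g\in\mathrm{red}(T_j)$ and $e_{j,g}\notin\mathrm{lt}(\mathrm{syz}(F'))$: its canonical decomposition with respect to $F'$. $U_{i-1}=T_1\wedge\dots\wedge T_{i-1}$. For $g_0\in\mathrm{red}(U_{i-1}\vee T_i)$, $v_{i,g_0}=g_0-(U_{i-1}\vee T_i)(g_0)\in\ker U_{i-1}\cap\ker T_i$. With $\sum_{j,g'}\lambda_{j,g'}(g'-T_j(g'))$ its canonical decomposition with respect to $\{T_1,\dots,T_{i-1}\}$ and $\sum_g\lambda_g(g-T_i(g))$ its $T_i$-decomposition, $s_{i,g_0}=\sum_g\lambda_g e_{i,g}-\sum_{j,g'}\lambda_{j,g'}e_{j,g'}$.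 *)

From HB Require Import structures.
From mathcomp Require Import all_boot all_order all_algebra.
From mathcomp Require Import finmap.
From mathcomp.multinomials Require Import monalg.
From Stdlib Require Import ClassicalEpsilon.



Unset Printing Implicit Defensive.

Import Order.TTheory GRing.Theory Num.Theory.
Local Open Scope ring_scope.

Section ReductionOperators.

Variable (K : fieldType) (d : Order.disp_t) (G : orderType d).

(* The vector space K G with basis G: finitely supported functions G -> K.
   The basis vector g is << g >>, the coefficient of v at g is v@_g,
   and msupp v is the (finite) set of g with v@_g != 0. *)
Local Notation KG := {malg K[G]}.

Definition is_lt (v : KG) (g : G) : Prop :=
  g \in msupp v /\ forall h, h \in msupp v -> (h <= g)%O.

Definition vlt (u v : KG) : Prop :=
  (u = 0 /\ v <> 0) \/
  (exists gu gv, [/\ is_lt u gu, is_lt v gv & (gu < gv)%O]).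

Definition vle (u v : KG) : Prop := vlt u v \/ u = v.

Definition reduction_op (T : KG -> KG) : Prop :=
  [/\ linear T, (forall v, T (T v) = T v) & (forall g : G, vle (T << g >>) << g >>)].

Definition red (T : KG -> KG) (g : G) : Prop := T << g >> <> << g >>.

Definition kerP (T : KG -> KG) (v : KG) : Prop := T v = 0.

Definition kerinv (V : KG -> Prop) : KG -> KG :=
  epsilon (inhabits (fun v : KG => v))
    (fun T => reduction_op T /\ forall v, kerP T v <-> V v).

Definition meet_op (T T' : KG -> KG) := kerinv (fun v => kerP T v \/ kerP T' v).
Definition join_op (T T' : KG -> KG) := kerinv (fun v => kerP T v /\ kerP T' v).

(* Families: T : nat -> (KG -> KG); the operator T_{j+1} of the paper is T j.
   The first k operators T_1, ..., T_k are T 0, ..., T (k-1). *)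

Definition sum_ker (T : nat -> KG -> KG) (k : nat) (v : KG) : Prop :=
  exists w : 'I_k -> KG, (forall j : 'I_k, kerP (T j) (w j)) /\ v = \sum_j w j.

Definition Umeet (T : nat -> KG -> KG) (k : nat) : KG -> KG :=
  kerinv (sum_ker T k).

Definition kerprod (T : nat -> KG -> KG) (k : nat) (x : {ffun 'I_k -> KG}) : Prop :=
  forall j : 'I_k, kerP (T j) (x j).

Definition syz (T : nat -> KG -> KG) (k : nat) (x : {ffun 'I_k -> KG}) : Prop :=
  kerprod T k x /\ \sum_j x j = 0.

(* the sum  sum_{g} lam_g (g - T(g)),  the coefficients lam being stored in an
   element of K G (finitely supported coefficient family indexed by G) *)
Definition dsum (T : KG -> KG) (lam : KG) : KG :=
  \sum_(g <- msupp lam) lam@_g *: (<< g >> - T << g >>).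

Definition tdec (T : KG -> KG) (v : KG) (lam : KG) : Prop :=
  (forall g, g \in msupp lam -> red T g) /\ v = dsum T lam.

(* expansion of x in ker T_1 x ... x ker T_k in the basis e_{j,g}:
   the coefficient of e_{j,g} is (lam j)@_g *)
Definition expansion (T : nat -> KG -> KG) (k : nat)
  (x : {ffun 'I_k -> KG}) (lam : 'I_k -> KG) : Prop :=
  forall j : 'I_k, tdec (T j) (x j) (lam j).

(* e_{j,g} is in lt(syz(T_1,...,T_k)) : it is the leading term (for the
   order e_{j,g} < e_{j',g'} iff j < j' or (j = j' and g < g')) of a
   nonzero syzygy *)
Definition lt_syz (T : nat -> KG -> KG) (k : nat) (j : 'I_k) (g : G) : Prop :=
  exists (x : {ffun 'I_k -> KG}) (lam : 'I_k -> KG),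
    [/\ syz T k x, x != 0, expansion T k x lam, g \in msupp (lam j) &
        forall (j' : 'I_k) g', g' \in msupp (lam j') ->
          (j' < j)%N \/ (j' = j /\ (g' <= g)%O)].

Definition candec (T : nat -> KG -> KG) (k : nat) (v : KG) (lam : 'I_k -> KG) : Prop :=
  [/\ forall (j : 'I_k) g, g \in msupp (lam j) -> red (T j) g,
      forall (j : 'I_k) g, g \in msupp (lam j) -> ~ lt_syz T k j g &
      v = \sum_(j : 'I_k) dsum (T j) (lam j)].

(* iota_i : ker T_1 x ... x ker T_{i-1} -> ker T_1 x ... x ker T_i,
   (v_1, ..., v_{i-1}) |-> (v_1, ..., v_{i-1}, 0); here i = m.+1 *)
Definition iota_syz (m : nat) (y : {ffun 'I_m -> KG}) : {ffun 'I_m.+1 -> KG} :=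
  [ffun j : 'I_m.+1 => (if (insub (val j) : option 'I_m) is Some j' then y j' else 0) : KG].

Definition s_rel (T : nat -> KG -> KG) (m : nat) (g0 : G) (s : {ffun 'I_m.+1 -> KG}) : Prop :=
  let v := << g0 >> - join_op (Umeet T m) (T m) << g0 >> in
  exists (lam : KG) (mu : 'I_m -> KG),
    [/\ tdec (T m) v lam, candec T m v mu &
        s = [ffun j : 'I_m.+1 =>
               (if (insub (val j) : option 'I_m) is Some j' then - dsum (T j') (mu j')
               else dsum (T m) lam) : KG]].

Definition s_elt (T : nat -> KG -> KG) (m : nat) (g0 : G) : {ffun 'I_m.+1 -> KG} :=
  epsilon (inhabits 0) (s_rel T m g0).

Definition in_span_s (T : nat -> KG -> KG) (m : nat) (x : {ffun 'I_m.+1 -> KG}) : Prop :=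
  exists (r : seq G) (c : G -> K),
    (forall g0, g0 \in r -> red (join_op (Umeet T m) (T m)) g0) /\
    x = \sum_(g0 <- r) c g0 *: s_elt T m g0.

End ReductionOperators.
Arguments is_lt {K d G}.
Arguments vlt {K d G}.
Arguments vle {K d G}.
Arguments reduction_op {K d G}.
Arguments red {K d G}.
Arguments kerP {K d G}.
Arguments kerinv {K d G}.
Arguments meet_op {K d G}.
Arguments join_op {K d G}.
Arguments sum_ker {K d G}.
Arguments Umeet {K d G}.
Arguments kerprod {K d G}.
Arguments syz {K d G}.
Arguments dsum {K d G}.
Arguments tdec {K d G}.
Arguments expansion {K d G}.
Arguments lt_syz {K d G}.
Arguments candec {K d G}.
Arguments iota_syz {K d G}.
Arguments s_rel {K d G}.
Arguments s_elt {K d G}.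
Arguments in_span_s {K d G}.

(* [ker^{-1}(V)] exists because every vector [u] is congruent modulo [V] to a
   unique [w] whose support avoids the leading terms of [V]; [w] is built by
   well-founded induction on the leading term of [u]. The same normal form, taken
   in the space of coordinates on the basis [e_{j,g}] ordered lexicographically
   and modulo the coordinates of syzygies, yields canonical decompositions, so
   the [s_{i,g0}] are well defined.
   If [x] is a syzygy of [T_1, ..., T_i], its last component lies in
   [ker U_{i-1} /\ ker T_i = ker (U_{i-1} \/ T_i)]; expanding it on the basis
   [g0 - (U_{i-1} \/ T_i)(g0)] of that kernel gives a combination [z] of the
   [s_{i,g0}] with the same last component, so [x - z] comes from
   [syz(T_1, ..., T_{i-1})]. The sum is direct since the last components of the
   [s_{i,g0}] are linearly independent. *)

From HB Require Import structures.
From mathcomp Require Import all_boot all_order all_algebra.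
From mathcomp Require Import finmap.
From mathcomp.multinomials Require Import monalg.
From Stdlib Require Import ClassicalEpsilon.

Import Order.TTheory GRing.Theory Num.Theory.
Local Open Scope ring_scope.

Lemma wf_ord_lt (m : nat) : well_founded (fun i j : 'I_m => (i < j)%O).
Proof.
move=> i; have [n] := ubnP i; elim: n i => [//|n IHn] i lt_in.
by constructor => j; rewrite ltEord => lt_ji; apply: IHn; exact: leq_trans lt_ji _.
Qed.

Section LexiWellFounded.
Context {d1 d2 : Order.disp_t} {A : orderType d1} {B : orderType d2}.
Hypothesis wfA : well_founded (fun x y : A => (x < y)%O).
Hypothesis wfB : well_founded (fun x y : B => (x < y)%O).

Lemma wf_lexi : well_founded (fun x y : A *l B => (x < y)%O).
Proof.
move=> [a b]; elim/(well_founded_ind wfA): a b => a IHa.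
elim/(well_founded_ind wfB) => b IHb; constructor => -[a' b'].
rewrite ltxi_pair; case: (ltgtP a' a) => [lt_a'a _|//|->]; [exact: IHa | exact: IHb].
Qed.

End LexiWellFounded.

Section NormalForm.
Context {K : fieldType} {X : lmodType K} {d : Order.disp_t} {B : orderType d}.
Hypothesis wfB : well_founded (fun x y : B => (x < y)%O).
Variables (coef : X -> B -> K) (basis : B -> X).
Hypothesis coefD : forall b x y, coef (x + y) b = coef x b + coef y b.
Hypothesis coefZ : forall b a x, coef (a *: x) b = a * coef x b.
Hypothesis coef_basis : forall b h, coef (basis b) h = (b == h)%:R.

Definition supp_le (b : B) (x : X) := forall h, coef x h != 0 -> (h <= b)%O.
Definition supp_lt (b : B) (x : X) := forall h, coef x h != 0 -> (h < b)%O.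
Definition leading (x : X) (b : B) := coef x b != 0 /\ supp_le b x.

Hypothesis leading_exists : forall x, x != 0 -> exists b, leading x b.

Lemma coef0 b : coef 0 b = 0.
Proof. by rewrite -(scale0r 0) coefZ mul0r. Qed.

Lemma coefB b x y : coef (x - y) b = coef x b - coef y b.
Proof. by rewrite coefD -scaleN1r coefZ mulN1r. Qed.

Lemma supp_le_lin b a x y : supp_le b x -> supp_le b y -> supp_le b (a *: x + y).
Proof.
move=> bx b_y h; rewrite coefD coefZ.
by case: (eqVneq (coef x h) 0) => [->|/bx //]; rewrite mulr0 add0r => /b_y.
Qed.

Lemma supp_ltW b x : supp_lt b x -> supp_le b x.
Proof. by move=> bx h /bx /ltW. Qed.

Lemma supp_le_lt b x : supp_le b x -> coef x b = 0 -> supp_lt b x.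
Proof.
move=> bx xb0 h xh; rewrite lt_neqAle bx // andbT.
by apply: contraNneq xh => ->; rewrite xb0.
Qed.

Lemma supp_le_basis b : supp_le b (basis b).
Proof. by move=> h; rewrite coef_basis; case: (eqVneq b h) => [->|_]; rewrite ?eqxx. Qed.

Lemma supp_le_leading {x b b'} : leading x b -> (b <= b')%O -> supp_le b' x.
Proof. by move=> [_ bx] le_bb' h /bx /le_trans; apply. Qed.

Variable V : X -> Prop.
Hypothesis V0 : V 0.
Hypothesis VL : forall a u w, V u -> V w -> V (a *: u + w).

Let VB u w : V u -> V w -> V (u - w).
Proof. by move=> Vu Vw; rewrite addrC -scaleN1r; apply: VL. Qed.

Definition lead_of_space (b : B) := exists2 v, V v & leading v b.
Definition reduced (w : X) := forall b, lead_of_space b -> coef w b = 0.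
Definition normal_form (u w : X) := V (u - w) /\ reduced w.

Lemma reduced0 : reduced 0.
Proof. by move=> b _; rewrite coef0. Qed.

Lemma normal_form_supp_lt {b} :
  (forall b', (b' < b)%O -> forall u, supp_le b' u ->
     exists2 w, normal_form u w & supp_le b' w) ->
  forall u, supp_lt b u -> exists2 w, normal_form u w & supp_lt b w.
Proof.
move=> IH u bu; have [->|/leading_exists [b' lead_b']] := eqVneq u 0.
  exists 0; last by move=> h; rewrite coef0 eqxx.
  by split; rewrite ?subr0 //; apply: reduced0.
have lt_b'b : (b' < b)%O by apply: bu; case: lead_b'.
have [w nf_w b'w] := IH b' lt_b'b u (supp_le_leading lead_b' (lexx _)).
by exists w => // h /b'w /le_lt_trans; apply.
Qed.

(* The leading coefficient of [u] at [b] is cancelled either by an element of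
   [V] with leading term [b] or, if there is none, by keeping [b] in [w]. *)
Lemma normal_form_supp_le {b u} :
  supp_le b u -> exists2 w, normal_form u w & supp_le b w.
Proof.
move=> bu; elim/(well_founded_ind wfB): b u bu => b IH u bu.
have nf_lt := normal_form_supp_lt IH; set c := coef u b.
have [[v Vv [vb0 bv]]|no_lead] := classic (lead_of_space b).
  set u' := - (c / coef v b) *: v + u.
  have [w [Vw red_w] bw] : exists2 w, normal_form u' w & supp_lt b w.
    apply/nf_lt/supp_le_lt; first exact: supp_le_lin.
    by rewrite coefD coefZ mulNr -mulrA mulVf // mulr1 addNr.
  exists w; last exact: supp_ltW.
  split=> //; have -> : u - w = (c / coef v b) *: v + (u' - w).
    by rewrite /u' addrA scaleNr addrA subrr add0r.
  exact: VL.
set u' := - c *: basis b + u.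
have [w [Vw red_w] bw] : exists2 w, normal_form u' w & supp_lt b w.
  apply/nf_lt/supp_le_lt; first by apply: supp_le_lin => //; apply: supp_le_basis.
  by rewrite coefD coefZ coef_basis eqxx mulr1 addNr.
exists (c *: basis b + w).
  split; first by rewrite opprD addrA -scaleNr [u + _]addrC.
  move=> h lead_h; rewrite coefD coefZ coef_basis red_w // addr0.
  by case: eqP => [eq_bh|_]; [move: lead_h; rewrite -eq_bh => /no_lead | rewrite mulr0].
by apply: supp_le_lin; [apply: supp_le_basis | apply: supp_ltW].
Qed.

Lemma normal_form_exists u : exists w, normal_form u w.
Proof.
have [->|/leading_exists [b [_ bu]]] := eqVneq u 0.
  by exists 0; split; rewrite ?subr0 //; apply: reduced0.
by have [w] := normal_form_supp_le bu; exists w.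
Qed.

Lemma normal_form_unique {u w1 w2} : normal_form u w1 -> normal_form u w2 -> w1 = w2.
Proof.
move=> [V1 red1] [V2 red2]; apply/eqP; rewrite -subr_eq0; apply/eqP.
have V12 : V (w1 - w2).
  have -> : w1 - w2 = (u - w2) - (u - w1) by rewrite opprB [RHS]addrC addrA subrK.
  exact: VB.
apply: contraPeq isT => /leading_exists [b lead_b].
by case: (lead_b) => /eqP []; rewrite coefB red1 ?red2 ?subrr //; exists (w1 - w2).
Qed.

Definition nf (u : X) : X := epsilon (inhabits 0) (normal_form u).

Lemma nfP u : normal_form u (nf u).
Proof. exact: epsilon_spec (normal_form_exists u). Qed.

Lemma nf_eq {u w} : normal_form u w -> nf u = w.
Proof. exact: normal_form_unique (nfP u). Qed.

Lemma nf_linear : linear nf.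
Proof.
move=> a u w; apply: nf_eq; have [[Vu red_u] [Vw red_w]] := (nfP u, nfP w).
split; first by rewrite opprD addrACA -scalerBr; apply: VL.
by move=> b lead_b; rewrite coefD coefZ red_u // red_w // mulr0 addr0.
Qed.

Lemma nf_idem u : nf (nf u) = nf u.
Proof. by apply: nf_eq; split; [rewrite subrr | case: (nfP u)]. Qed.

Lemma nf_eq0 u : nf u = 0 <-> V u.
Proof.
split=> [nfu0|Vu]; first by have [] := nfP u; rewrite nfu0 subr0.
by apply: nf_eq; split; rewrite ?subr0 //; apply: reduced0.
Qed.

Lemma nf_basis b : nf (basis b) = basis b \/ supp_lt b (nf (basis b)).
Proof.
have [lead_b|no_lead] := classic (lead_of_space b); [right | left].
  have [w nf_w bw] := normal_form_supp_le (supp_le_basis b); rewrite (nf_eq nf_w).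
  by apply: supp_le_lt => //; case: nf_w => _; apply.
apply: nf_eq; split=> [|h lead_h]; first by rewrite subrr.
rewrite coef_basis; case: eqP => // eq_bh.
by move: lead_h; rewrite -eq_bh => /no_lead.
Qed.

End NormalForm.

Section KerInv.
Context {K : fieldType} {d : Order.disp_t} {G : orderType d}.
Local Notation KG := {malg K[G]}.

Lemma scale_monalgU (c : K) (g : G) : c *: (<< g >> : KG) = << c *g g >>.
Proof. by apply/malgP => h; rewrite mcoeffZ !mcoeffU mulr_natr. Qed.

Lemma monalg_expand (v : KG) : v = \sum_(g <- msupp v) v@_g *: << g >>.
Proof. by rewrite {1}(monalgE v); apply: eq_bigr => g _; rewrite scale_monalgU. Qed.

Lemma is_lt_leading (v : KG) g : is_lt v g <-> leading (fun v g => v@_g) v g.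
Proof.
rewrite /is_lt /leading /supp_le; split=> [[vg le_v]|[vg le_v]].
  by split=> [|h]; rewrite mcoeff_neq0 // => /le_v.
by split=> [|h]; rewrite -mcoeff_neq0 // => /le_v.
Qed.

Lemma seq_has_max (s : seq G) :
  s != [::] -> exists2 g, g \in s & forall h, h \in s -> (h <= g)%O.
Proof.
elim: s => [//|a [|b s] IH] _.
  by exists a => [|h]; rewrite ?mem_seq1 // => /eqP ->.
have [g gs le_s] := IH isT.
have [le_ag|lt_ga] := leP a g.
  by exists g => [|h]; rewrite inE ?gs ?orbT // => /predU1P [->|/le_s].
exists a => [|h]; rewrite inE ?eqxx // => /predU1P [->//|/le_s /le_trans]; apply.
exact: ltW.
Qed.

Lemma monalg_leading_exists {v : KG} : v != 0 -> exists g, is_lt v g.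
Proof.
move=> v_neq0; have [|g gv le_v] := seq_has_max (msupp v : seq G); last by exists g.
apply: contra v_neq0 => /eqP v0; apply/eqP/malgP => g.
by rewrite mcoeff0 mcoeff_outdom // -[g \in msupp v]/(g \in (msupp v : seq G)) v0.
Qed.

Lemma is_lt_monalgU g : is_lt (<< g >> : KG) g.
Proof.
rewrite /is_lt msuppU oner_eq0; split=> [|h]; first by rewrite inE.
by rewrite inE => /eqP ->.
Qed.

Lemma vlt_supp_lt (w : KG) g : supp_lt (fun v g => v@_g) g w -> vlt w << g >>.
Proof.
move=> gw; have [->|/monalg_leading_exists [h lt_h]] := eqVneq w 0.
  by left; split=> //; apply/eqP; rewrite monalgU_eq0 oner_eq0.
right; exists h, g; split=> //; first exact: is_lt_monalgU.
by apply: gw; case: lt_h; rewrite mcoeff_neq0.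
Qed.

Hypothesis wfG : well_founded (fun x y : G => (x < y)%O).

Lemma kerinvP (V : KG -> Prop) :
  V 0 -> (forall a u w, V u -> V w -> V (a *: u + w)) ->
  reduction_op (kerinv V) /\ forall v, kerP (kerinv V) v <-> V v.
Proof.
move=> V0 VL.
apply: (epsilon_spec _ (fun T => reduction_op T /\ forall v, kerP T v <-> V v)).
have lead_ex (v : KG) : v != 0 -> exists g, leading (fun v g => v@_g) v g.
  by move=> /monalg_leading_exists [g /is_lt_leading]; exists g.
have coefD g (u v : KG) : (u + v)@_g = u@_g + v@_g by exact: mcoeffD.
have coefZ g a (u : KG) : (a *: u)@_g = a * u@_g by exact: mcoeffZ.
have coefU g h : (<< g >> : KG)@_h = (g == h)%:R by exact: mcoeffU.
exists (nf (fun v g => v@_g) V); split; [split|].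
- exact: (nf_linear wfG _ _ coefD coefZ coefU lead_ex _ V0 VL).
- exact: (nf_idem wfG _ _ coefD coefZ coefU lead_ex _ V0 VL).
- move=> g; case: (nf_basis wfG _ _ coefD coefZ coefU lead_ex _ V0 VL g).
    by right.
  by left; apply: vlt_supp_lt.
- exact: (nf_eq0 wfG _ _ coefD coefZ coefU lead_ex _ V0 VL).
Qed.

End KerInv.

Section ReductionOperator.
Context {K : fieldType} {d : Order.disp_t} {G : orderType d}.
Local Notation KG := {malg K[G]}.
Context {T : KG -> KG}.
Hypothesis hT : reduction_op T.

Lemma redop_lin a u v : T (a *: u + v) = a *: T u + T v.
Proof. by case: hT => lin _ _; apply: lin. Qed.

Lemma redop0 : T 0 = 0.
Proof. by have := redop_lin (-1) 0 0; rewrite scaler0 addr0 scaleN1r addNr. Qed.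

Lemma redopD u v : T (u + v) = T u + T v.
Proof. by rewrite -[u]scale1r redop_lin !scale1r. Qed.

Lemma redopZ a u : T (a *: u) = a *: T u.
Proof. by rewrite -[a *: u]addr0 redop_lin redop0 addr0. Qed.

Lemma redopN u : T (- u) = - T u.
Proof. by rewrite -scaleN1r redopZ scaleN1r. Qed.

Lemma redopB u v : T (u - v) = T u - T v.
Proof. by rewrite redopD redopN. Qed.

Lemma redop_idem v : T (T v) = T v.
Proof. by case: hT. Qed.

Lemma redop_expand v : T v = \sum_(g <- msupp v) v@_g *: T << g >>.
Proof.
rewrite {1}(monalg_expand v) (big_morph T redopD redop0).
by apply: eq_bigr => g _; rewrite redopZ.
Qed.

Lemma dsum0 : dsum T 0 = 0.
Proof. by rewrite /dsum msupp0 big_seq_fset0. Qed.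

Lemma dsumE lam : dsum T lam = lam - T lam.
Proof.
rewrite /dsum (eq_bigr _ (fun g _ => scalerBr _ _ _)) sumrB.
by rewrite -monalg_expand -redop_expand.
Qed.

Lemma dsum_lin a u v : dsum T (a *: u + v) = a *: dsum T u + dsum T v.
Proof. by rewrite !dsumE redop_lin scalerBr opprD addrACA. Qed.

Lemma dsumB u v : dsum T (u - v) = dsum T u - dsum T v.
Proof. by rewrite -scaleN1r addrC dsum_lin scaleN1r addrC. Qed.

Lemma dsum_ker lam : kerP T (dsum T lam).
Proof. by rewrite /kerP dsumE redopB redop_idem subrr. Qed.

Lemma redop_fixed v : (forall g, g \in msupp v -> ~ red T g) -> T v = v.
Proof.
move=> fix_v; rewrite redop_expand [in RHS](monalg_expand v).
apply: eq_big_seq => g /fix_v nred; congr (_ *: _).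
by apply/eqP; apply: contra_notT nred => /eqP.
Qed.

Lemma red_coef g h : red T g -> ~~ (h < g)%O -> (T << g >>)@_h = 0.
Proof.
move=> red_g h_ge; case: hT => _ _ /(_ g) [[[-> _]|[gu [gv [lt_gu lt_gv gu_gv]]]]|//].
  by rewrite mcoeff0.
have gv_g : gv = g by case: lt_gv; rewrite msuppU oner_eq0 inE => /eqP.
apply: mcoeff_outdom; apply: contra h_ge => /(proj2 lt_gu) h_gu.
by rewrite -gv_g (le_lt_trans h_gu gu_gv).
Qed.

Lemma tdec_exists w : kerP T w -> exists lam, tdec T w lam.
Proof.
move=> Tw0.
pose lam : KG := [malg g in msupp w => if T << g >> != << g >> then w@_g else 0].
have lamE g : lam@_g = if T << g >> != << g >> then w@_g else 0.
  by rewrite mcoeffE; case: msuppP => //; case: ifP.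
have fix_rest : T (w - lam) = w - lam.
  apply: redop_fixed => g; rewrite -mcoeff_neq0 mcoeffB lamE.
  by case: ifP => [_|/negbFE/eqP fix_g _]; rewrite ?subrr ?eqxx.
have T_lam : T lam = lam - w.
  by rewrite -{1}[lam](subKr w) redopB Tw0 fix_rest sub0r opprB.
exists lam; split; last by rewrite dsumE T_lam subKr.
by move=> g; rewrite -mcoeff_neq0 lamE; case: ifP => [/eqP|]; rewrite ?eqxx.
Qed.

Lemma dsum_eq0 lam : (forall g, g \in msupp lam -> red T g) -> dsum T lam = 0 -> lam = 0.
Proof.
move=> red_lam; rewrite dsumE => /eqP; rewrite subr_eq0 => /eqP T_lam.
apply: contraPeq isT => /monalg_leading_exists [h [h_lam le_lam]].
move: h_lam; rewrite -mcoeff_neq0 T_lam redop_expand.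
rewrite (big_morph _ (mcoeffD h) (mcoeff0 h)) big1_seq ?eqxx //.
move=> g /andP [_ g_lam]; rewrite mcoeffZ red_coef ?mulr0 //; first exact: red_lam.
by rewrite -leNgt; apply: le_lam.
Qed.

End ReductionOperator.

Section CoefficientFamilies.
Context {K : fieldType} {d : Order.disp_t} {G : orderType d} {m : nat}.
Local Notation KG := {malg K[G]}.

Definition fam_coef (lam : {ffun 'I_m -> KG}) (p : 'I_m *l G) : K := (lam p.1)@_p.2.

Definition fam_basis (p : 'I_m *l G) : {ffun 'I_m -> KG} :=
  [ffun j => if j == p.1 then << p.2 >> else 0].

Lemma fam_coefD p x y : fam_coef (x + y) p = fam_coef x p + fam_coef y p.
Proof. by rewrite /fam_coef ffunE mcoeffD. Qed.

Lemma fam_coefZ p a x : fam_coef (a *: x) p = a * fam_coef x p.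
Proof. by rewrite /fam_coef ffunE mcoeffZ. Qed.

Lemma fam_coef_basis p q : fam_coef (fam_basis p) q = (p == q)%:R.
Proof.
case: p q => [j g] [j' g']; rewrite /fam_coef /fam_basis ffunE /=.
have -> : ((j, g) == (j', g') :> ('I_m *l G)) = (j' == j) && (g == g').
  by rewrite [j' == j]eq_sym.
by case: eqP => _; rewrite ?mcoeff0 ?mcoeffU.
Qed.

Lemma fam_leading_exists lam : lam != 0 -> exists p, leading fam_coef lam p.
Proof.
move=> lam_neq0; have [j0 lam_j0] : exists j, lam j != 0.
  apply/existsP; apply: contraNT lam_neq0 => /existsPn lam0.
  by apply/eqP/ffunP => j; rewrite ffunE; apply/eqP/negPn/lam0.
case: (@arg_maxnP _ j0 (fun j => lam j != 0) val lam_j0) => {j0 lam_j0}j lam_j j_max.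
have [g [g_in le_g]] := monalg_leading_exists lam_j.
exists (j, g); split; first by rewrite /fam_coef mcoeff_neq0.
move=> [j' g']; rewrite /fam_coef /= mcoeff_neq0 => g'_in.
have lam_j' : lam j' != 0 by apply: contraTneq g'_in => ->; rewrite msupp0 inE.
have le_j'j : (j' <= j)%N := j_max _ lam_j'.
rewrite lexi_pair leEord le_j'j /=; apply/implyP => le_jj'.
have eq_j : j' = j by apply/val_inj/eqP; rewrite eqn_leq le_jj' le_j'j.
by apply: le_g; rewrite -eq_j.
Qed.

End CoefficientFamilies.

Section CanonicalDecomposition.
Context {K : fieldType} {d : Order.disp_t} {G : orderType d}.
Local Notation KG := {malg K[G]}.
Hypothesis wfG : well_founded (fun x y : G => (x < y)%O).
Context {T : nat -> KG -> KG} {m : nat}.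
Hypothesis hT : forall j : 'I_m, reduction_op (T j).

(* The coordinates of a syzygy of [T_1, ..., T_m] in the basis [e_{j,g}]. *)
Definition syz_coords (lam : {ffun 'I_m -> KG}) : Prop :=
  (forall j g, g \in msupp (lam j) -> red (T j) g) /\
  \sum_(j : 'I_m) dsum (T j) (lam j) = 0.

Lemma syz_coords0 : syz_coords 0.
Proof.
split=> [j g|]; first by rewrite ffunE msupp0 inE.
by rewrite big1 // => j _; rewrite ffunE dsum0.
Qed.

Lemma syz_coords_lin a x y :
  syz_coords x -> syz_coords y -> syz_coords (a *: x + y).
Proof.
move=> [red_x sum_x] [red_y sum_y]; split=> [j g|].
  rewrite !ffunE -mcoeff_neq0 mcoeffD mcoeffZ.
  have [x0|] := eqVneq (x j)@_g 0; last by rewrite mcoeff_neq0 => /red_x.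
  by rewrite x0 mulr0 add0r mcoeff_neq0 => /red_y.
under eq_bigr => j _ do rewrite !ffunE (dsum_lin (hT j)).
by rewrite big_split /= -scaler_sumr sum_x sum_y scaler0 addr0.
Qed.

Lemma lt_syz_lead j g :
  lt_syz T m j g -> lead_of_space fam_coef syz_coords ((j, g) : 'I_m *l G).
Proof.
move=> [x [lam [[_ sum_x] _ exp_x g_in bound]]].
exists [ffun j => lam j]; split.
- by move=> j' g'; rewrite ffunE => /(proj1 (exp_x j')).
- by under eq_bigr => j' _ do rewrite ffunE -(proj2 (exp_x j')).
- by rewrite /fam_coef ffunE mcoeff_neq0.
move=> [j' g']; rewrite /fam_coef ffunE /= mcoeff_neq0 lexi_pair !leEord.
case/bound=> [lt_j'j|[-> le_g'g]]; last by rewrite leqnn le_g'g.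
by rewrite ltnW //= leqNgt lt_j'j.
Qed.

Lemma candec_exists v : sum_ker T m v -> exists mu, candec T m v mu.
Proof.
move=> [w [ker_w ->]].
have /fin_all_exists [lam tdec_lam] : forall j : 'I_m, exists lam, tdec (T j) (w j) lam.
  by move=> j; apply: tdec_exists (hT j) _ (ker_w j).
have [mu [[red_diff sum_diff] red_mu]] :=
  normal_form_exists (wf_lexi (@wf_ord_lt m) wfG) fam_coef fam_basis
    fam_coefD fam_coefZ fam_coef_basis fam_leading_exists
    syz_coords syz_coords0 syz_coords_lin [ffun j => lam j].
exists mu; split.
- move=> j g; rewrite -mcoeff_neq0.
  have [diff0|] := eqVneq ((([ffun j => lam j] - mu) j)@_g) 0.
    move/eqP: diff0; rewrite !ffunE mcoeffB subr_eq0 => /eqP <-.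
    by rewrite mcoeff_neq0; apply: (proj1 (tdec_lam j)).
  by rewrite mcoeff_neq0 => /red_diff.
- by move=> j g; rewrite -mcoeff_neq0 => mu_g /lt_syz_lead/red_mu; apply/eqP.
have -> : \sum_j w j = \sum_(j : 'I_m) dsum (T j) (lam j).
  by apply: eq_bigr => j _; apply: (proj2 (tdec_lam j)).
apply/eqP; rewrite -subr_eq0 -sumrB -[X in _ == X]sum_diff; apply/eqP/eq_bigr => j _.
by rewrite !ffunE (dsumB (hT j)).
Qed.

End CanonicalDecomposition.

Section Regroup.
Context {K : fieldType} {d : Order.disp_t} {G : orderType d}.
Local Notation KG := {malg K[G]}.

Lemma sumZ_undup {X : lmodType K} (F : G -> X) (r : seq G) (c : G -> K) :
  \sum_(g0 <- r) c g0 *: F g0 =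
  \sum_(g <- undup r) (\sum_(g0 <- r) c g0 *: (<< g0 >> : KG))@_g *: F g.
Proof.
under [RHS]eq_bigr => g _ do rewrite (big_morph _ (mcoeffD g) (mcoeff0 g)) scaler_suml.
rewrite exchange_big /=; apply: eq_big_seq => g0 g0_r.
rewrite (bigD1_seq g0) ?mem_undup ?undup_uniq //= mcoeffZ mcoeffU eqxx mulr1.
rewrite big1 ?addr0 // => g; rewrite eq_sym => /negbTE g_neq.
by rewrite mcoeffZ mcoeffU g_neq mulr0 scale0r.
Qed.

Lemma msupp_sumZ (r : seq G) (c : G -> K) g :
  g \in msupp (\sum_(g0 <- r) c g0 *: (<< g0 >> : KG)) -> g \in r.
Proof.
apply: contraTT => g_r; rewrite -mcoeff_eq0 (big_morph _ (mcoeffD g) (mcoeff0 g)).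
rewrite big1_seq // => g0 /andP [_ g0_r]; rewrite mcoeffZ mcoeffU.
by case: eqP g0_r => [->|_ _]; [rewrite (negbTE g_r) | rewrite mulr0].
Qed.

End Regroup.

Section Syzygies.
Context {K : fieldType} {d : Order.disp_t} {G : orderType d}.
Local Notation KG := {malg K[G]}.
Context {T : nat -> KG -> KG} {k : nat}.
Hypothesis hT : forall j : 'I_k, reduction_op (T j).

Lemma syz0 : syz T k 0.
Proof.
split=> [j|]; first by rewrite /kerP ffunE (redop0 (hT j)).
by rewrite big1 // => j _; rewrite ffunE.
Qed.

Lemma syz_lin a x y : syz T k x -> syz T k y -> syz T k (a *: x + y).
Proof.
move=> [ker_x sum_x] [ker_y sum_y]; split=> [j|].
  by rewrite /kerP !ffunE (redop_lin (hT j)) ker_x ker_y scaler0 addr0.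
under eq_bigr => j _ do rewrite !ffunE.
by rewrite big_split /= -scaler_sumr sum_x sum_y scaler0 addr0.
Qed.

Lemma syzD x y : syz T k x -> syz T k y -> syz T k (x + y).
Proof. by rewrite -{2}[x]scale1r; apply: syz_lin. Qed.

Lemma syzB x y : syz T k x -> syz T k y -> syz T k (x - y).
Proof. by move=> syz_x syz_y; rewrite addrC -scaleN1r; apply: syz_lin. Qed.

Lemma syzZ a x : syz T k x -> syz T k (a *: x).
Proof. by move=> syz_x; rewrite -[_ *: _]addr0; apply: syz_lin syz_x syz0. Qed.

End Syzygies.

Lemma insub_widen {m : nat} {X : Type} (f : 'I_m -> X) (y : X) (i : 'I_m) :
  (if (insub (val (widen_ord (leqnSn m) i)) : option 'I_m) is Some j then f j else y)
  = f i.
Proof. by case: insubP => [j _ ji|]; [congr f; apply: val_inj | rewrite /= ltn_ord]. Qed.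

Lemma insub_ord_max {m : nat} {X : Type} (f : 'I_m -> X) (y : X) :
  (if (insub (val (@ord_max m)) : option 'I_m) is Some j then f j else y) = y.
Proof. by rewrite insubF //= ltnn. Qed.

Lemma ord_widen_or_max {m : nat} (j : 'I_m.+1) :
  (exists i : 'I_m, j = widen_ord (leqnSn m) i) \/ j = ord_max.
Proof.
have [lt_jm|le_mj] := ltnP j m; first by left; exists (Ordinal lt_jm); apply: val_inj.
by right; apply/val_inj/eqP; rewrite eqn_leq le_mj -ltnS ltn_ord.
Qed.

Section SyzygyDecomposition.
Context {K : fieldType} {d : Order.disp_t} {G : orderType d}.
Local Notation KG := {malg K[G]}.
Hypothesis wfG : well_founded (fun x y : G => (x < y)%O).
Variables (T : nat -> KG -> KG) (m : nat).
Hypothesis hT : forall j, (j <= m)%N -> reduction_op (T j).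

Let hT_lt (j : 'I_m) : reduction_op (T j) := hT j (ltnW (ltn_ord j)).
Let hT_le (j : 'I_m.+1) : reduction_op (T j) := hT j (ltn_ord j).
Let hTm : reduction_op (T m) := hT m (leqnn m).

Local Notation U := (Umeet T m).
Local Notation J := (join_op (Umeet T m) (T m)).

Lemma kerP_lin (S : KG -> KG) : reduction_op S ->
  forall a u w, kerP S u -> kerP S w -> kerP S (a *: u + w).
Proof.
by move=> hS a u w ker_u ker_w; rewrite /kerP redop_lin // ker_u ker_w scaler0 addr0.
Qed.

Lemma UmeetP : reduction_op U /\ forall v, kerP U v <-> sum_ker T m v.
Proof.
apply: (kerinvP wfG (sum_ker T m)) => [|a u w [wu [ker_u ->]] [ww [ker_w ->]]].
  by exists (fun=> 0); split=> [j|]; [apply: redop0 | rewrite big1].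
exists (fun j => a *: wu j + ww j); split=> [j|]; first exact: kerP_lin.
by rewrite big_split /= -scaler_sumr.
Qed.

Lemma joinP : reduction_op J /\ forall v, kerP J v <-> kerP U v /\ kerP (T m) v.
Proof.
have [hU _] := UmeetP.
apply: (kerinvP wfG (fun v => kerP U v /\ kerP (T m) v)) => [|a u w [Uu Tu] [Uw Tw]].
  by split; apply: redop0.
by split; apply: kerP_lin.
Qed.

Lemma s_rel_exists g0 : exists s, s_rel T m g0 s.
Proof.
have [hJ kerJ] := joinP; have [_ kerU] := UmeetP.
have /kerJ [/kerU sum_v ker_v] : kerP J (<< g0 >> - J << g0 >>).
  by rewrite /kerP redopB // redop_idem // subrr.
have [lam tdec_lam] := tdec_exists hTm _ ker_v.
have [mu candec_mu] := candec_exists wfG hT_lt _ sum_v.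
by eexists; exists lam, mu; split; first exact: tdec_lam.
Qed.

Lemma s_eltP g0 : s_rel T m g0 (s_elt T m g0).
Proof. exact: epsilon_spec (s_rel_exists g0). Qed.

Lemma s_elt_max g0 : s_elt T m g0 ord_max = << g0 >> - J << g0 >>.
Proof.
by have [lam [mu [[_ ->] _ ->]]] := s_eltP g0; rewrite ffunE insub_ord_max.
Qed.

Lemma s_elt_syz g0 : syz T m.+1 (s_elt T m g0).
Proof.
have [lam [mu [tdec_lam [_ _ sum_mu] ->]]] := s_eltP g0; split=> [j|].
  have [[i ->]|->] := ord_widen_or_max j; rewrite /kerP ffunE.
    by rewrite insub_widen (redopN (hT_lt i)) (dsum_ker (hT_lt i)) oppr0.
  by rewrite insub_ord_max; apply: (dsum_ker hTm).
rewrite big_ord_recr /= ffunE insub_ord_max.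
under eq_bigr => i _ do rewrite ffunE insub_widen.
by rewrite sumrN -sum_mu -(proj2 tdec_lam) addNr.
Qed.

Lemma span_syz z : in_span_s T m z -> syz T m.+1 z.
Proof.
move=> [r [c [_ ->]]]; apply: big_ind => [| |g0 _].
- exact: syz0 hT_le.
- exact: syzD hT_le.
- exact/(syzZ hT_le)/s_elt_syz.
Qed.

Lemma iota_syz_syz y : syz T m y -> syz T m.+1 (iota_syz m y).
Proof.
move=> [ker_y sum_y]; split=> [j|].
  have [[i ->]|->] := ord_widen_or_max j; rewrite /kerP ffunE.
    by rewrite insub_widen; apply: ker_y.
  by rewrite insub_ord_max; apply: (redop0 hTm).
rewrite big_ord_recr /= ffunE insub_ord_max addr0 -[RHS]sum_y.
by apply: eq_bigr => i _; rewrite ffunE insub_widen.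
Qed.

Lemma syz_restr w : syz T m.+1 w -> w ord_max = 0 ->
  syz T m [ffun i => w (widen_ord (leqnSn m) i)].
Proof.
move=> [ker_w sum_w] w_max0; split=> [i|].
  by rewrite /kerP ffunE; apply: (ker_w (widen_ord _ i)).
under eq_bigr => i _ do rewrite ffunE.
by rewrite -[RHS]sum_w big_ord_recr /= w_max0 addr0.
Qed.

Lemma iota_syz_restr (w : {ffun 'I_m.+1 -> KG}) : w ord_max = 0 ->
  iota_syz m [ffun i => w (widen_ord (leqnSn m) i)] = w.
Proof.
move=> w_max0; apply/ffunP => j; rewrite ffunE.
have [[i ->]|->] := ord_widen_or_max j; first by rewrite insub_widen ffunE.
by rewrite insub_ord_max w_max0.
Qed.

Lemma syz_last_ker {x} : syz T m.+1 x -> kerP J (x ord_max).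
Proof.
move=> [ker_x sum_x]; have [_ kerJ] := joinP; have [_ kerU] := UmeetP.
apply/kerJ; split; last exact: (ker_x ord_max).
apply/kerU; exists (fun i => - x (widen_ord (leqnSn m) i)); split=> [i|].
  by rewrite /kerP (redopN (hT_lt i)) (ker_x (widen_ord _ i)) oppr0.
move: sum_x; rewrite big_ord_recr sumrN /= => /eqP.
by rewrite addr_eq0 => /eqP ->; rewrite opprK.
Qed.

Lemma syz_decomposition x : syz T m.+1 x <->
  exists (y : {ffun 'I_m -> KG}) (z : {ffun 'I_m.+1 -> KG}),
    [/\ syz T m y, in_span_s T m z & x = iota_syz m y + z].
Proof.
split; last first.
  by move=> [y [z [/iota_syz_syz syz_y /span_syz syz_z ->]]]; apply: (syzD hT_le).
move=> syz_x; have [hJ _] := joinP.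
have [lam [red_lam last_x]] := tdec_exists hJ _ (syz_last_ker syz_x).
pose z := \sum_(g0 <- msupp lam) lam@_g0 *: s_elt T m g0.
have span_z : in_span_s T m z by exists (msupp lam), (fun g => lam@_g).
have last_z : z ord_max = x ord_max.
  by rewrite last_x sum_ffunE; apply: eq_bigr => g0 _; rewrite ffunE s_elt_max.
have syz_xz : syz T m.+1 (x - z) by apply: (syzB hT_le) => //; apply: span_syz.
have last_xz : (x - z) ord_max = 0 by rewrite !ffunE last_z subrr.
exists [ffun i => (x - z) (widen_ord (leqnSn m) i)], z; split=> //.
  exact: syz_restr.
by rewrite iota_syz_restr // subrK.
Qed.

Lemma iota_span_eq0 y : in_span_s T m (iota_syz m y) -> iota_syz m y = 0.
Proof.
move=> [r [c [red_r span_y]]]; have [hJ _] := joinP.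
set lam : KG := \sum_(g0 <- r) c g0 *: << g0 >>.
have lam0 : lam = 0.
  apply: (dsum_eq0 hJ) => [g /msupp_sumZ /red_r //|].
  have := congr1 (fun f : {ffun 'I_m.+1 -> KG} => f ord_max) span_y.
  rewrite /= ffunE insub_ord_max sum_ffunE => /esym <-.
  rewrite (dsumE hJ) /lam (big_morph _ (redopD hJ) (redop0 hJ)) -sumrB.
  by apply: eq_bigr => g0 _; rewrite ffunE s_elt_max (redopZ hJ) scalerBr.
rewrite span_y (sumZ_undup (s_elt T m)) -/lam lam0 big1 // => g _.
by rewrite mcoeff0 scale0r.
Qed.

End SyzygyDecomposition.

Theorem mainTheorem5 (K : fieldType) (d : Order.disp_t) (G : orderType d)
  (wfG : well_founded (fun x y : G => (x < y)%O))
  (n : nat) (T : nat -> {malg K[G]} -> {malg K[G]})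
  (hT : forall j, (j < n)%N -> reduction_op (T j))
  (m : nat) (hm1 : (1 <= m)%N) (hmn : (m < n)%N) :
  (forall x : {ffun 'I_m.+1 -> {malg K[G]}},
     syz T m.+1 x <->
     exists (y : {ffun 'I_m -> {malg K[G]}}) (z : {ffun 'I_m.+1 -> {malg K[G]}}),
       [/\ syz T m y, in_span_s T m z & x = iota_syz m y + z]) /\
  (forall y : {ffun 'I_m -> {malg K[G]}},
     syz T m y -> in_span_s T m (iota_syz m y) -> iota_syz m y = 0).
Proof.
have hT' j : (j <= m)%N -> reduction_op (T j).
  by move=> le_jm; apply: hT; apply: leq_ltn_trans le_jm hmn.
split=> [x|y _]; first exact: syz_decomposition wfG T m hT' x.
exact: iota_span_eq0 wfG T m hT' y.
Qed.
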